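(* Let $\mathcal B$ be a binomial class of reluctant functions with $|F(\emptyset,X)|=1$ for every finite $X$, and for integers $m,x\ge0$ let $p_m(x)=|F(S,X)|$ for any $S,X$ with $|S|=m$, $|X|=x$. Let $x$ be a positive integer, $X=\{1,\dots,x\}$, $n\ge0$, and let $z_0\le z_1\le\cdots\le z_{n-1}$ be integers in $\{1,\dots,x\}$. Then $$p_n(x)=\sum_{i=0}^{n-1}\binom ni\,p_{n-i}(x-z_i)\cdot ord(z_0,\dots,z_{i-1})\;+\;ord(z_0,\dots,z_{n-1}),$$ where $ord()=1$ for $i=0$.
   Context: For finite disjoint sets $S,X$, a reluctant function from $S$ to $X$ is a map $f:S\to S\cup X$ such that for every $s\in S$ there is a positive integer $k$ with $f^k(s)\in X$ (iterates of $f$); then $f^k(s)$ is the final image of $s$. A binomial class $\mathcal B$ assigns to each pair $(S,X)$ of finite disjoint sets a set $F(S,X)$ of reluctant functions from $S$ to $X$ such that: (i) $F$ is compatible with bijections (bijections $S\to S'$, $X\to X'$ transport $F(S,X)$ onto $F(S',X')$); (ii) for disjoint finite $X,Y$ (disjoint from $S$), the map sending a reluctant function $f$ from $S$ to $X\cup Y$ to the pair $(f_A,f_{S\setminus A})$, where $A$ is the set of $s\in S$ whose final image lies in $X$ and $f_A,f_{S\setminus A}$ are the restrictions, is a bijection from $F(S,X\cup Y)$ onto $\bigsqcup_{A\subseteq S}F(A,X)\times F(S\setminus A,Y)$. Order statistics: for $S=\{s_0,\dots,s_{m-1}\}$, $X=\{1,\dots,x\}$ and $f\in F(S,X)$, let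 $x_i$ be the final image of $s_i$ and $x_{(0)}\le\cdots\le x_{(m-1)}$ the nondecreasing rearrangement of $(x_0,\dots,x_{m-1})$. For integers $z_0\le\cdots\le z_{m-1}$ in $X$, $ord(z_0,\dots,z_{m-1})$ is the number of $f\in F(S,X)$ with $x_{(j)}\le z_j$ for all $0\le j\le m-1$ (this depends only on $m$ and the $z_j$). *)

From mathcomp Require Import all_boot.
Set Implicit Arguments. Unset Strict Implicit. Unset Printing Implicit Defensive.

(* A function from S to X is modelled as f : S -> S + X; the disjoint union
   S ⊔ X is the sum type, so disjointness is automatic. *)

Definition step (S X : Type) (f : S -> S + X) (u : S + X) : S + X :=
  match u with inl s => f s | inr x => inr x end.

Definition reluctant (S X : Type) (f : S -> S + X) : Prop :=
  forall s : S, exists k : nat, 0 < k /\ exists x : X, iter k (step f) (inl s) = inr x.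

(* Final image of s (for a reluctant f the orbit of s enters X within #|S|
   steps, and the step function fixes X, so this is f^k(s) for the k at
   which f^k(s) lands in X).  None only for non-reluctant f. *)
Definition final (S : finType) (X : Type) (f : S -> S + X) (s : S) : option X :=
  match iter #|S| (step f) (inl s) with inl _ => None | inr x => Some x end.

Definition sum_map (A A' B B' : Type) (g : A -> A') (h : B -> B') (u : A + B) : A' + B' :=
  match u with inl a => inl (g a) | inr b => inr (h b) end.

Section Split.
Variables (S X Y : finType).
Implicit Types (f : {ffun S -> S + (X + Y)}) (A : {set S}).

Definition finalX f : {set S} :=
  [set s | if final f s is Some (inl _) then true else false].

(* restriction of f to A (as a function from A to X); values outside A + X
   never occur when A = finalX f, they are sent to an arbitrary default. *)
Definition restrX A f : {ffun {s : S | s \in A} -> {s : S | s \in A} + X} :=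
  [ffun s => match f (val s) with
             | inl s' => if @insub _ (fun t => t \in A) _ s' is Some t then inl t else inl s
             | inr (inl x) => inr x
             | inr (inr _) => inl s
             end].

Definition restrY A f : {ffun {s : S | s \notin A} -> {s : S | s \notin A} + Y} :=
  [ffun s => match f (val s) with
             | inl s' => if @insub _ (fun t => t \notin A) _ s' is Some t then inl t else inl s
             | inr (inr y) => inr y
             | inr (inl _) => inl s
             end].
End Split.

Definition fclass := forall S X : finType, {set {ffun S -> S + X}}.

Record binomial_class (F : fclass) : Prop := BinomialClass {
  bc_reluctant : forall (S X : finType) (f : {ffun S -> S + X}),
      f \in F S X -> reluctant f;
  (* (i) compatibility with bijections *)
  bc_bij : forall (S S' X X' : finType) (sg : S -> S') (tau : X -> X'),
      bijective sg -> bijective tau ->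
      forall (f : {ffun S -> S + X}) (f' : {ffun S' -> S' + X'}),
      (forall s, f' (sg s) = sum_map sg tau (f s)) ->
      (f \in F S X) = (f' \in F S' X');
  (* (ii) the splitting map is a bijection onto the disjoint union *)
  bc_split_into : forall (S X Y : finType) (f : {ffun S -> S + (X + Y)}),
      f \in F S (X + Y)%type ->
      restrX (finalX f) f \in F _ X /\ restrY (finalX f) f \in F _ Y;
  bc_split_inj : forall (S X Y : finType) (f g : {ffun S -> S + (X + Y)}),
      f \in F S (X + Y)%type -> g \in F S (X + Y)%type ->
      finalX f = finalX g ->
      restrX (finalX f) f = restrX (finalX f) g ->
      restrY (finalX f) f = restrY (finalX f) g -> f = g;
  bc_split_onto : forall (S X Y : finType) (A : {set S})
      (g : {ffun {s : S | s \in A} -> {s : S | s \in A} + X})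
      (h : {ffun {s : S | s \notin A} -> {s : S | s \notin A} + Y}),
      g \in F _ X -> h \in F _ Y ->
      exists f : {ffun S -> S + (X + Y)}, [/\ f \in F S (X + Y)%type,
        finalX f = A, restrX A f = g & restrY A f = h]
}.

(* p_m(x) = |F(S,X)| with |S| = m, |X| = x (well defined by (i)) *)
Definition pcount (F : fclass) (m x : nat) : nat := #|F 'I_m 'I_x|.

(* X = {1,...,x} is represented by 'I_x, the element i standing for i+1. *)
Definition final_nat (m x : nat) (f : {ffun 'I_m -> 'I_m + 'I_x}) (s : 'I_m) : nat :=
  if final f s is Some y then (val y).+1 else 0.

Definition ord_cond (x : nat) (zs : seq nat)
    (f : {ffun 'I_(size zs) -> 'I_(size zs) + 'I_x}) : bool :=
  let fs := sort leq [seq final_nat f s | s <- enum 'I_(size zs)] in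
  [forall j : 'I_(size zs), nth 0 fs j <= nth 0 zs j].

Definition ord (F : fclass) (x : nat) (zs : seq nat) : nat :=
  #|[set f in F 'I_(size zs) 'I_x | @ord_cond x zs f]|.

From mathcomp Require Import all_boot zify.

(** Sort the final images of f ∈ F(S, {1..x}), |S| = n.  Either they are
   dominated by z, or there is a least i with x_(i) > z_i; since z is
   nondecreasing this happens iff exactly i elements have final image <= z_i
   and their sorted images are dominated by z_0, ..., z_(i-1).  Splitting
   {1..x} = {1..z_i} ⊔ {z_i+1..x}, axiom (ii) identifies the f whose set of
   such "low" elements is a given i-set A with pairs (g, h),
   g ∈ F(A, {1..z_i}) dominated by z_0, ..., z_(i-1) and
   h ∈ F(S \ A, {z_i+1..x}).  There are 'C(n, i) choices of A,
   ord(z_0, ..., z_(i-1)) choices of g (a second split, with an empty upper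
   part, shows that enlarging the target {1..z_i} to {1..x} does not change
   this number) and p_(n-i)(x - z_i) choices of h. *)

Section IterStep.
Variables (S X : Type) (f : S -> S + X).

Lemma iter_step_inr k x : iter k (step f) (inr x) = inr x.
Proof. by elim: k => //= k ->. Qed.

Lemma iter_step_stable k k' u x : iter k (step f) u = inr x -> k <= k' ->
  iter k' (step f) u = inr x.
Proof. by move=> fku le_kk'; rewrite -(subnK le_kk') iterD fku iter_step_inr. Qed.

Lemma iter_step_periodic i j u : iter i (step f) u = iter j (step f) u -> i < j ->
  forall m, exists2 t, t < j & iter m (step f) u = iter t (step f) u.
Proof.
move=> eq_ij lt_ij m; elim/ltn_ind: m => m IHm.
have [lt_mj | le_jm] := ltnP m j; first by exists m.
have -> : iter m (step f) u = iter (m - j + i) (step f) u.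
  by rewrite -{1}(subnK le_jm) iterD -eq_ij -iterD.
apply: IHm; lia.
Qed.
End IterStep.
Arguments iter_step_stable {S X f k k' u x}.
Arguments iter_step_periodic {S X f i j u}.

Section FinalImage.
Variables (S : finType) (X : Type) (f : S -> S + X).

(* Before reaching X the orbit of s visits pairwise distinct points of S:
   a repetition would make it periodic inside S. *)
Lemma reluctant_iter_card : reluctant f ->
  forall s, exists x, iter #|S| (step f) (inl s) = inr x.
Proof.
move=> f_rel s.
pose inX (u : S + X) := if u is inr _ then true else false.
have exX : exists k, inX (iter k (step f) (inl s)).
  by have [k [_ [x fkx]]] := f_rel s; exists k; rewrite fkx.
case: (ex_minnP exX) => k0 + min_k0.
case E: (iter k0 (step f) (inl s)) => [//|x] _.
have before : forall t, t < k0 -> exists s', iter t (step f) (inl s) = inl s'.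
  move=> t lt_tk0; case Et: (iter t (step f) (inl s)) => [s'|y]; first by exists s'.
  by have := min_k0 t; rewrite Et leqNgt lt_tk0 => /(_ isT).
have distinct : forall i j, i < j -> j < k0 ->
    iter i (step f) (inl s) <> iter j (step f) (inl s).
  move=> i j lt_ij lt_jk0 eq_ij.
  have [t lt_tj Et] := iter_step_periodic eq_ij lt_ij k0.
  have [s' Es'] := before t (ltn_trans lt_tj lt_jk0).
  by move: E; rewrite Et Es'.
pose orb (t : 'I_k0) : S := if iter t (step f) (inl s) is inl s' then s' else s.
have orb_inj : injective orb.
  move=> i j; rewrite /orb.
  have [si Ei] := before i (ltn_ord i); have [sj Ej] := before j (ltn_ord j).
  rewrite Ei Ej => eq_s; apply/val_inj/eqP; case: ltngtP => // lt.
    by case: (distinct _ _ lt (ltn_ord j)); rewrite Ei Ej eq_s.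
  by case: (distinct _ _ lt (ltn_ord i)); rewrite Ei Ej eq_s.
by exists x; apply: iter_step_stable E _; rewrite -[k0]card_ord (leq_card _ orb_inj).
Qed.

Lemma final_iter s x : iter #|S| (step f) (inl s) = inr x -> final f s = Some x.
Proof. by rewrite /final => ->. Qed.

Lemma reluctant_final : reluctant f -> forall s, exists x, final f s = Some x.
Proof.
move=> f_rel s; have [x fx] := reluctant_iter_card f_rel s.
by exists x; apply: final_iter _ _ fx.
Qed.

Lemma final_inr s x : f s = inr x -> final f s = Some x.
Proof.
move=> fs; apply: final_iter.
have : 0 < #|S| by apply/card_gt0P; exists s.
by case: #|S| => // k _; rewrite iterSr /= fs iter_step_inr.
Qed.

Lemma final_inl s s' : reluctant f -> f s = inl s' -> final f s' = final f s.
Proof.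
move=> f_rel fs.
have [a fa] := reluctant_iter_card f_rel s'; have [b fb] := reluctant_iter_card f_rel s.
rewrite (final_iter _ _ fa) (final_iter _ _ fb).
by have := iterSr #|S| (step f) (inl s); rewrite /= fs fa fb => -[->].
Qed.
End FinalImage.
Arguments reluctant_iter_card {S X f}.
Arguments final_iter {S X f s x}.
Arguments reluctant_final {S X f}.
Arguments final_inr {S X f s x}.
Arguments final_inl {S X f s s'}.

Definition conj_fun {S S' X X' : finType} (sg : S -> S') (sg' : S' -> S)
  (tau : X -> X') (f : {ffun S -> S + X}) : {ffun S' -> S' + X'} :=
  [ffun s' => sum_map sg tau (f (sg' s'))].

Section Conjugation.
Variables (S S' X X' : finType) (sg : S -> S') (sg' : S' -> S) (tau : X -> X').
Hypothesis sgK : cancel sg sg'.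

Lemma conj_funE f s : conj_fun sg sg' tau f (sg s) = sum_map sg tau (f s).
Proof. by rewrite ffunE sgK. Qed.

Lemma iter_conj_fun f k u :
  iter k (step (conj_fun sg sg' tau f)) (sum_map sg tau u) =
  sum_map sg tau (iter k (step f) u).
Proof. by elim: k => //= k ->; case: (iter k (step f) u) => //= s; apply: conj_funE. Qed.

Lemma reluctant_conj_fun (f : {ffun S -> S + X}) : cancel sg' sg -> reluctant f ->
  reluctant (conj_fun sg sg' tau f).
Proof.
move=> sgK' f_rel s'; have [k [k_gt0 [x fx]]] := f_rel (sg' s').
exists k; split=> //; exists (tau x).
by have := iter_conj_fun f k (inl (sg' s')); rewrite /= sgK' fx.
Qed.

Lemma final_conj_fun f s : #|S| = #|S'| ->
  final (conj_fun sg sg' tau f) (sg s) = omap tau (final f s).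
Proof.
move=> eq_card; rewrite /final -eq_card.
by have /= -> := iter_conj_fun f #|S| (inl s); case: (iter _ _ _).
Qed.

Lemma conj_funK (tau' : X' -> X) : cancel tau tau' ->
  cancel (conj_fun sg sg' tau) (conj_fun sg' sg tau').
Proof.
move=> tauK f; apply/ffunP => s; rewrite !ffunE sgK.
by case: (f _) => [a|b] /=; rewrite ?sgK ?tauK.
Qed.
End Conjugation.
Arguments conj_funK {S S' X X' sg sg' tau} sgK {tau'}.
Arguments final_conj_fun {S S' X X' sg sg'} tau sgK.

Section Transport.
Variables (F : fclass) (HF : binomial_class F).
Variables (S S' X X' : finType) (sg : S -> S') (sg' : S' -> S).
Variables (tau : X -> X') (tau' : X' -> X).
Hypotheses (sgK : cancel sg sg') (sgK' : cancel sg' sg).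
Hypotheses (tauK : cancel tau tau') (tauK' : cancel tau' tau).

Lemma conj_fun_inF f : (f \in F S X) = (conj_fun sg sg' tau f \in F S' X').
Proof. by apply: (bc_bij HF (Bijective sgK sgK') (Bijective tauK tauK')); apply: conj_funE. Qed.

Lemma card_conj_fun (P : pred {ffun S' -> S' + X'}) (P' : pred {ffun S -> S + X}) :
  {in F S X, forall f, P' f = P (conj_fun sg sg' tau f)} ->
  #|[set f in F S X | P' f]| = #|[set f in F S' X' | P f]|.
Proof.
move=> eqP'P; rewrite -(card_imset _ (can_inj (conj_funK sgK tauK))).
apply: eq_card => g; rewrite [in RHS]inE; apply/imsetP/idP.
  case=> f; rewrite inE => /andP [fF P'f] ->.
  by rewrite -conj_fun_inF fF -eqP'P.
move=> /andP [gF Pg]; have gK := conj_funK sgK' tauK' g.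
exists (conj_fun sg' sg tau' g) => //.
by rewrite inE conj_fun_inF gK gF eqP'P ?gK // conj_fun_inF gK.
Qed.
End Transport.
Arguments card_conj_fun {F} HF {S S' X X' sg sg' tau tau'} sgK sgK' tauK tauK' P P'.
Arguments conj_fun_inF {F} HF {S S' X X' sg sg' tau tau'} sgK sgK' tauK tauK'.

Lemma eq_card_cancel (T T' : finType) : #|T| = #|T'| ->
  exists sg : T -> T', exists sg' : T' -> T, cancel sg sg' /\ cancel sg' sg.
Proof.
move=> eq_card.
exists (fun t => enum_val (cast_ord eq_card (enum_rank t))).
exists (fun t => enum_val (cast_ord (esym eq_card) (enum_rank t))).
by split => t; rewrite enum_valK ?cast_ordK ?cast_ordKV enum_rankK.
Qed.

Lemma card_class_split {F : fclass} (HF : binomial_class F) {S X Y : finType}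
    (A : {set S}) (Q : pred {ffun {s : S | s \in A} -> {s : S | s \in A} + X}) :
  #|[set f in F S (X + Y)%type | (finalX f == A) && Q (restrX A f)]| =
  #|[set g in F _ X | Q g]| * #|F {s : S | s \notin A} Y|.
Proof.
rewrite -cardsX; pose restrXY (f : {ffun S -> S + (X + Y)}) := (restrX A f, restrY A f).
rewrite -(@card_in_imset _ _ restrXY); last first.
  move=> f g; rewrite !inE => /and3P [fF /eqP fA _] /and3P [gF /eqP gA _] [eqX eqY].
  by apply: (bc_split_inj HF fF gF); rewrite ?fA ?gA.
apply: eq_card => -[g h]; rewrite [in RHS]inE; apply/imsetP/idP.
  case=> f + [-> ->]; rewrite !inE /= => /and3P [fF /eqP fA ->].
  by have := bc_split_into HF fF; rewrite fA => -[gF hF]; rewrite gF hF.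
rewrite /= !inE => /andP [/andP [gF Qg] hF].
have [f [fF fA fg fh]] := bc_split_onto HF gF hF.
by exists f; rewrite /restrXY ?fg ?fh // inE fF fA eqxx fg.
Qed.

Section Restriction.
Variables (S X Y : finType) (f : {ffun S -> S + (X + Y)}) (A : {set S}).
Hypotheses (f_rel : reluctant f) (fA : finalX f = A).

Lemma finalX_final s : s \in A -> exists x, final f s = Some (inl x).
Proof. by rewrite -fA inE; case: (final f s) => [[x|y]|] //; exists x. Qed.

(* A = finalX f is closed under f, so the junk branches of restrX never fire. *)
Lemma iter_restrX k (u : {s | s \in A} + X) :
  iter k (step f) (sum_map val inl u) = sum_map val inl (iter k (step (restrX A f)) u).
Proof.
elim: k => //= k ->; case: (iter k _ u) => [t|x] //=; rewrite ffunE.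
have [x0 ft] := finalX_final _ (valP t).
case fE: (f (val t)) => [s'|[x|y]] //=.
  by rewrite insubT // -fA inE (final_inl f_rel fE) ft.
by move: ft; rewrite (final_inr fE).
Qed.

Lemma final_restrX : reluctant (restrX A f) ->
  forall t : {s | s \in A}, final f (val t) = omap inl (final (restrX A f) t).
Proof.
move=> g_rel t; have [y gy] := reluctant_iter_card g_rel t.
have gy' : iter #|S| (step (restrX A f)) (inl t) = inr y.
  by apply: (iter_step_stable gy); rewrite card_sig max_card.
rewrite (final_iter gy); apply: final_iter.
by have := iter_restrX #|S| (inl t); rewrite gy'.
Qed.
End Restriction.
Arguments final_restrX {S X Y f A} f_rel fA.

Lemma path_count_leq0 c a s : path leq a s -> c < a -> count (fun b => b <= c) s = 0.
Proof.
move=> /(order_path_min leq_trans) /allP a_le lt_ca; apply/eqP.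
rewrite -leqn0 leqNgt -has_count; apply/hasPn => b /a_le le_ab /=.
by rewrite -ltnNge (leq_trans lt_ca le_ab).
Qed.
Arguments path_count_leq0 {c a s}.

Lemma sorted_nth_leq c s j : sorted leq s -> j < size s ->
  (nth 0 s j <= c) = (j < count (fun a => a <= c) s).
Proof.
elim: s j => //= a s IH j a_s; have s_sorted := path_sorted a_s.
case: (leqP a c) => [le_ac | lt_ca].
  by case: j => [|j] //=; rewrite add1n ltnS; apply: IH.
rewrite (path_count_leq0 a_s lt_ca); case: j => [|j] /= lt_j; first by rewrite leqNgt lt_ca.
apply/negbTE; rewrite -ltnNge (leq_trans lt_ca) //.
by move/allP: (order_path_min leq_trans a_s); apply; apply: mem_nth.
Qed.
Arguments sorted_nth_leq c {s j}.

Lemma sorted_filter_leq c s : sorted leq s ->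
  filter (fun a => a <= c) s = take (count (fun a => a <= c) s) s.
Proof.
elim: s => //= a s IH a_s; have s_sorted := path_sorted a_s.
case: (leqP a c) => [le_ac | lt_ca] /=; first by rewrite IH.
rewrite (path_count_leq0 a_s lt_ca) take0.
by apply/eqP; rewrite -size_eq0 size_filter (path_count_leq0 a_s lt_ca).
Qed.
Arguments sorted_filter_leq c {s}.

Definition dominated (zs l : seq nat) : bool :=
  [forall j : 'I_(size zs), nth 0 l j <= nth 0 zs j].

Section FirstExcess.
Variables (z : seq nat).
Hypothesis z_sorted : sorted leq z.

Definition first_excess (i : nat) (l : seq nat) : bool :=
  dominated (take i z) l && (nth 0 z i < nth 0 l i).

Lemma dominated_take_nth i l j : dominated (take i z) l -> j < i -> i <= size z ->
  nth 0 l j <= nth 0 z j.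
Proof.
move=> /forallP dom_l lt_ji le_iz.
have lt_j : j < size (take i z) by rewrite size_take_min (minn_idPl le_iz).
by have := dom_l (Ordinal lt_j); rewrite /= nth_take.
Qed.

Lemma dominated_take_take i l : dominated (take i z) (take i l) = dominated (take i z) l.
Proof.
apply: eq_forallb => j; rewrite nth_take //.
by apply: leq_trans (ltn_ord j) _; rewrite size_take_min geq_minl.
Qed.

Lemma nth_sorted_leq j i : j <= i -> i < size z -> nth 0 z j <= nth 0 z i.
Proof.
move=> le_ji lt_iz; apply: (sorted_leq_nth leq_trans leqnn 0 z_sorted) => //.
by rewrite inE (leq_ltn_trans le_ji lt_iz).
Qed.

Lemma first_excess_sortE i l : i < size z -> i < size l ->
  first_excess i (sort leq l) =
  (count (fun a => a <= nth 0 z i) l == i) &&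
  dominated (take i z) (sort leq (filter (fun a => a <= nth 0 z i) l)).
Proof.
move=> lt_iz lt_il; set c := nth 0 z i; set s := sort leq l.
have s_sorted : sorted leq s := sort_sorted leq_total l.
have lt_is : i < size s by rewrite size_sort.
have -> : count (fun a => a <= c) l = count (fun a => a <= c) s.
  by apply/permP; rewrite perm_sym perm_sort.
rewrite -filter_sort; [|exact: leq_total|exact: leq_trans].
rewrite -/s (sorted_filter_leq c s_sorted) /first_excess.
rewrite ltnNge (sorted_nth_leq c s_sorted lt_is) -leqNgt.
apply/andP/andP => [[dom_s le_count] | [/eqP count_i]]; last first.
  by rewrite count_i dominated_take_take leqnn.
suff count_i : count (fun a => a <= c) s = i by rewrite count_i dominated_take_take.
apply/eqP; rewrite eqn_leq le_count /=; case: (posnP i) => [-> // | i_gt0].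
have lt_pi : i.-1 < i by rewrite ltn_predL.
rewrite -(prednK i_gt0) -(sorted_nth_leq c s_sorted (ltn_trans lt_pi lt_is)).
apply: leq_trans (dominated_take_nth _ _ _ dom_s lt_pi (ltnW lt_iz)) _.
exact: nth_sorted_leq (leq_pred i) lt_iz.
Qed.

Lemma dominated_or_first_excess (l : seq nat) :
  dominated z l + \sum_(i < size z) first_excess i l = 1.
Proof.
have [dom_l | /forallPn [j0 bad_j0]] := boolP (dominated z l).
  rewrite big1 // => i _; apply/eqP; rewrite eqb0 /first_excess negb_and -leqNgt.
  by move/forallP: dom_l => /(_ i) ->; rewrite orbT.
have exP : exists j, (j < size z) && (nth 0 z j < nth 0 l j).
  by exists j0; rewrite ltn_ord ltnNge.
have [i0 /andP [lt_i0 bad_i0] min_i0] := ex_minnP exP.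
have good_lt j : j < i0 -> nth 0 l j <= nth 0 z j.
  move=> lt_ji0; rewrite leqNgt; apply/negP => bad_j.
  by have := min_i0 j; rewrite bad_j (ltn_trans lt_ji0 lt_i0) leqNgt lt_ji0 => /(_ isT).
rewrite add0n (bigD1 (Ordinal lt_i0)) //=.
have -> : first_excess i0 l.
  rewrite /first_excess bad_i0 andbT; apply/forallP => j.
  by rewrite nth_take ?good_lt // (leq_trans (ltn_ord j)) // size_take_min geq_minl.
rewrite big1 // => j ne_ji0; apply/eqP; rewrite eqb0 /first_excess negb_and.
case: (ltngtP j i0) => [lt_ji0 | lt_i0j | eq_ji0].
- by rewrite -leqNgt good_lt ?orbT.
- apply/orP; left; apply/negP => /forallP.
  have lt_i0tk : i0 < size (take j z) by rewrite size_take (ltn_ord j).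
  by move=> /(_ (Ordinal lt_i0tk)) /=; rewrite nth_take // leqNgt bad_i0.
- by move: ne_ji0; rewrite -val_eqE /= eq_ji0 eqxx.
Qed.
End FirstExcess.
Arguments dominated_take_nth {z i l j}.
Arguments nth_sorted_leq {z} z_sorted {j i}.

(* final_nat for an arbitrary domain: 'I_k stands for {1..k}, and 0 flags a
   missing final image. *)
Definition final_val {S : finType} {k : nat} (f : S -> S + 'I_k) (s : S) : nat :=
  if final f s is Some y then (val y).+1 else 0.

Definition final_vals {S : finType} {k : nat} (f : {ffun S -> S + 'I_k}) : seq nat :=
  [seq final_val f s | s <- enum S].

Lemma size_final_vals {m k} (f : {ffun 'I_m -> 'I_m + 'I_k}) : size (final_vals f) = m.
Proof. by rewrite size_map size_enum_ord. Qed.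

Lemma perm_enum_cancel (S S' : finType) (sg : S -> S') (sg' : S' -> S) :
  cancel sg sg' -> cancel sg' sg -> perm_eq (enum S') (map sg (enum S)).
Proof.
move=> sgK sgK'; apply: uniq_perm; first exact: enum_uniq.
  by rewrite (map_inj_uniq (can_inj sgK)) enum_uniq.
by move=> s'; rewrite mem_enum -(sgK' s') map_f ?mem_enum.
Qed.
Arguments perm_enum_cancel {S S' sg sg'}.

Lemma perm_final_vals_conj (S S' : finType) k (sg : S -> S') (sg' : S' -> S)
    (sgK : cancel sg sg') (sgK' : cancel sg' sg) (g : {ffun S -> S + 'I_k}) :
  perm_eq (final_vals (conj_fun sg sg' id g)) (final_vals g).
Proof.
have eq_card : #|S| = #|S'| := bij_eq_card (Bijective sgK sgK').
rewrite /final_vals; apply: perm_trans (perm_map _ (perm_enum_cancel sgK sgK')) _.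
rewrite -map_comp; apply/permP => p; congr count; apply: eq_map => s /=.
by rewrite /final_val (final_conj_fun id sgK g s eq_card); case: (final g s).
Qed.

Lemma sort_final_vals_conj (S S' : finType) k (sg : S -> S') (sg' : S' -> S)
    (sgK : cancel sg sg') (sgK' : cancel sg' sg) (g : {ffun S -> S + 'I_k}) :
  sort leq (final_vals (conj_fun sg sg' id g)) = sort leq (final_vals g).
Proof. exact/(perm_sortP leq_total leq_trans anti_leq)/perm_final_vals_conj. Qed.

Section OrdSplit.
Variables (c x : nat) (le_cx : c <= x).

Definition ord_split (y : 'I_x) : 'I_c + 'I_(x - c) :=
  split (cast_ord (esym (subnKC le_cx)) y).

Definition ord_unsplit (u : 'I_c + 'I_(x - c)) : 'I_x :=
  cast_ord (subnKC le_cx) (unsplit u).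

Lemma ord_splitK : cancel ord_split ord_unsplit.
Proof. by move=> y; rewrite /ord_split /ord_unsplit splitK cast_ordKV. Qed.

Lemma ord_unsplitK : cancel ord_unsplit ord_split.
Proof. by move=> u; rewrite /ord_split /ord_unsplit cast_ordK unsplitK. Qed.

Lemma ord_splitP (y : 'I_x) :
  if ord_split y is inl y' then (val y' == val y) && (val y < c) else c <= val y.
Proof. by rewrite /ord_split; case: splitP => j /= ->; rewrite ?eqxx ?ltn_ord ?leq_addr. Qed.
End OrdSplit.
Arguments ord_split {c x} le_cx.
Arguments ord_unsplit {c x} le_cx.
Arguments ord_splitK {c x} le_cx.
Arguments ord_unsplitK {c x} le_cx.
Arguments ord_splitP {c x} le_cx y.

Section LowPart.
Variables (m c x : nat) (le_cx : c <= x) (f : {ffun 'I_m -> 'I_m + 'I_x}).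
Hypothesis f_rel : reluctant f.

(* The same function, with {1..x} viewed as {1..c} ⊔ {c+1..x}. *)
Let fc := conj_fun id id (ord_split le_cx) f.

Lemma reluctant_split : reluctant fc.
Proof. exact: reluctant_conj_fun. Qed.

Lemma final_split s : final fc s = omap (ord_split le_cx) (final f s).
Proof. exact: (final_conj_fun _ (fun _ => erefl) f s erefl). Qed.

Lemma low_set_finalX : [set s | final_val f s <= c] = finalX fc.
Proof.
apply/setP => s; rewrite !inE final_split /final_val.
have [y ->] := reluctant_final f_rel s; have /= := ord_splitP le_cx y.
by case: (ord_split le_cx y) => y' => [/andP [] | /= le_cy] //; rewrite ltnNge le_cy.
Qed.

Section Restricted.
Variable (A : {set 'I_m}).
Hypotheses (fcA : finalX fc = A) (g_rel : reluctant (restrX A fc)).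

Lemma final_val_restrX t : final_val (restrX A fc) t = final_val f (val t).
Proof.
have := final_restrX reluctant_split fcA g_rel t; rewrite final_split /final_val.
have [y ->] := reluctant_final f_rel (val t).
case: (final (restrX A fc) t) => [y'|] //=; have := ord_splitP le_cx y.
by case: (ord_split le_cx y) => // y1 /andP [/eqP eq_y _] [<-]; rewrite eq_y.
Qed.

Lemma perm_final_vals_restrX :
  perm_eq (final_vals (restrX A fc)) (filter (fun a => a <= c) (final_vals f)).
Proof.
rewrite /final_vals (eq_map final_val_restrX) map_comp filter_map; apply: perm_map.
apply: uniq_perm; first by rewrite (map_inj_uniq val_inj) enum_uniq.
  by rewrite filter_uniq ?enum_uniq.
move=> s; rewrite mem_filter /= mem_enum andbT.
have -> : (final_val f s <= c) = (s \in A) by rewrite -fcA -low_set_finalX inE.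
apply/mapP/idP => [[t _ ->] | sA]; first exact: valP.
by exists (exist _ s sA); rewrite ?mem_enum.
Qed.
End Restricted.
End LowPart.

Section Counting.
Variables (F : fclass) (HF : binomial_class F).

Lemma card_class_sort_final_vals (S S' : finType) k (R : pred (seq nat)) :
  #|S| = #|S'| ->
  #|[set g in F S 'I_k | R (sort leq (final_vals g))]| =
  #|[set g in F S' 'I_k | R (sort leq (final_vals g))]|.
Proof.
move=> /eq_card_cancel [sg [sg' [sgK sgK']]].
apply: (@card_conj_fun F HF _ _ _ _ sg sg' id id sgK sgK' (fun _ => erefl) (fun _ => erefl)).
by move=> g _; rewrite sort_final_vals_conj.
Qed.

Lemma card_class_eq_card (S S' : finType) k : #|S| = #|S'| -> #|F S 'I_k| = #|F S' 'I_k|.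
Proof.
have cardT (T : finType) :
    #|[set g in F T 'I_k | xpredT (sort leq (final_vals g))]| = #|F T 'I_k|.
  by apply: eq_card => g; rewrite inE andbT.
by move=> eqST; rewrite -!cardT; exact: (card_class_sort_final_vals _ _ k xpredT eqST).
Qed.

Lemma low_split_conj m c x (le_cx : c <= x) (A : {set 'I_m}) (R : pred (seq nat))
    (f : {ffun 'I_m -> 'I_m + 'I_x}) : f \in F 'I_m 'I_x ->
  let fc := conj_fun id id (ord_split le_cx) f in
  ([set s | final_val f s <= c] == A) && R (sort leq (filter (fun a => a <= c) (final_vals f))) =
  (finalX fc == A) && R (sort leq (final_vals (restrX A fc))).
Proof.
move=> fF fc; have f_rel := bc_reluctant HF fF.
have fcF : fc \in F _ _.
  by rewrite -(@conj_fun_inF F HF _ _ _ _ id id _ _ (fun _ => erefl) (fun _ => erefl)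
    (ord_splitK le_cx) (ord_unsplitK le_cx)).
rewrite low_set_finalX //; case: eqP => //= fcA.
have gF : restrX A fc \in F _ _ by have := bc_split_into HF fcF; rewrite fcA => -[].
congr R; apply/(perm_sortP leq_total leq_trans anti_leq); rewrite perm_sym.
exact: perm_final_vals_restrX fcA (bc_reluctant HF gF).
Qed.

Lemma card_low_split m i c x (le_cx : c <= x) (A : {set 'I_m}) (R : pred (seq nat)) :
  #|A| = i ->
  #|[set f in F 'I_m 'I_x | ([set s | final_val f s <= c] == A) &&
       R (sort leq (filter (fun a => a <= c) (final_vals f)))]| =
  #|[set g in F 'I_i 'I_c | R (sort leq (final_vals g))]| * pcount F (m - i) (x - c).
Proof.
move=> card_A.
rewrite (@card_conj_fun F HF _ _ _ _ id id _ _ (fun _ => erefl) (fun _ => erefl)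
  (ord_splitK le_cx) (ord_unsplitK le_cx)
  (fun fc => (finalX fc == A) && R (sort leq (final_vals (restrX A fc))))); last first.
  by move=> f fF; apply: low_split_conj.
rewrite (card_class_split HF A (fun g => R (sort leq (final_vals g)))) /pcount.
congr (_ * _); [apply: card_class_sort_final_vals | apply: card_class_eq_card].
  by rewrite card_sig card_ord -card_A; apply: eq_card => s; rewrite inE.
rewrite card_sig card_ord -card_A; have := cardC A; rewrite card_ord.
have -> : #|[predC A]| = #|[pred s | s \notin A]| by apply: eq_card.
lia.
Qed.
End Counting.
Arguments card_low_split {F} HF {m i c x} le_cx A R.

Lemma ord_sort_final_vals (F : fclass) x zs m : size zs = m ->
  ord F x zs = #|[set g in F 'I_m 'I_x | dominated zs (sort leq (final_vals g))]|.
Proof. by move=> <-. Qed.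

Lemma low_set_eqT m k c (g : {ffun 'I_m -> 'I_m + 'I_k}) :
  ([set s | final_val g s <= c] == setT) = all (fun a => a <= c) (final_vals g).
Proof.
apply/eqP/allP => [low_g _ /mapP [s _ ->] | all_le].
  by have := in_setT s; rewrite -low_g inE.
by apply/setP => s; rewrite !inE all_le // map_f ?mem_enum.
Qed.

Lemma count_enum_card (T : finType) (P : pred T) : count P (enum T) = #|[set s | P s]|.
Proof. by rewrite -sum1dep_card -sum1_count big_enum_cond. Qed.

Lemma sum_nat_of_bool_card (T : finType) (D : {pred T}) (P : pred T) :
  \sum_(t in D) (P t : nat) = #|[set t in D | P t]|.
Proof. by rewrite -sum1dep_card big_mkcondr; apply: eq_bigr => t _; case: (P t). Qed.

Section Recurrence.
Variables (F : fclass) (HF : binomial_class F).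
Hypothesis F_empty : forall S X : finType, #|S| = 0 -> #|F S X| = 1.
Variables (x : nat) (z : seq nat).
Hypotheses (z_sorted : sorted leq z) (z_range : all (fun t => (1 <= t) && (t <= x)) z).

Lemma nth_z_leq {i} : i < size z -> nth 0 z i <= x.
Proof. by move=> lt_iz; move/allP: z_range => /(_ _ (mem_nth 0 lt_iz)) /andP []. Qed.

(* Functions dominated by take i z have all their final images <= z_i, so
   the target can be cut down to {1..z_i} (the upper part of the split is
   then empty). *)
Lemma ord_take i : i < size z ->
  ord F x (take i z) =
  #|[set g in F 'I_i 'I_(nth 0 z i) | dominated (take i z) (sort leq (final_vals g))]|.
Proof.
move=> lt_iz; set c := nth 0 z i.
rewrite (@ord_sort_final_vals _ _ _ i); last by rewrite size_take lt_iz.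
have := @card_low_split F HF i i _ x (nth_z_leq lt_iz) setT (dominated (take i z)).
rewrite cardsT card_ord /pcount subnn F_empty ?card_ord // muln1 => <- //.
apply: eq_card => g; rewrite !inE low_set_eqT; congr (_ && _).
have [all_le | not_all_le] := boolP (all _ _); first by rewrite (all_filterP all_le).
apply/negbTE/negP => dom_g; case/negP: not_all_le; apply/allP => a a_g.
have a_s : a \in sort leq (final_vals g) by rewrite mem_sort.
have lt_ai : index a (sort leq (final_vals g)) < i.
  by rewrite -[X in _ < X](size_final_vals g) -(size_sort leq) index_mem.
have := dominated_take_nth dom_g lt_ai (ltnW lt_iz); rewrite nth_index // => le_a.
exact: leq_trans le_a (nth_sorted_leq z_sorted (ltnW lt_ai) lt_iz).
Qed.

Lemma card_first_excess i : i < size z ->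
  #|[set f in F 'I_(size z) 'I_x | first_excess z i (sort leq (final_vals f))]| =
  'C(size z, i) * pcount F (size z - i) (x - nth 0 z i) * ord F x (take i z).
Proof.
move=> lt_iz; set n := size z; set c := nth 0 z i.
pose low (f : {ffun 'I_n -> 'I_n + 'I_x}) := [set s | final_val f s <= c].
pose R (f : {ffun 'I_n -> 'I_n + 'I_x}) :=
  dominated (take i z) (sort leq (filter (fun a => a <= c) (final_vals f))).
have -> : [set f in F 'I_n 'I_x | first_excess z i (sort leq (final_vals f))] =
          [set f in F 'I_n 'I_x | (#|low f| == i) && R f].
  apply/setP => f; rewrite !inE first_excess_sortE ?size_final_vals //.
  by rewrite count_map count_enum_card.
rewrite -sum1dep_card (partition_big low (fun A => #|A| == i)); last first.
  by move=> f /andP [_ /andP []].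
rewrite (eq_bigr (fun _ => #|[set g in F 'I_i 'I_c | dominated (take i z)
                              (sort leq (final_vals g))]| * pcount F (n - i) (x - c))).
  by rewrite sum_nat_const -cardsE card_draws card_ord -ord_take // [ord _ _ _ * _]mulnC mulnA.
move=> A /eqP card_A; rewrite -(card_low_split HF (nth_z_leq lt_iz) A _ card_A) -sum1dep_card.
apply: eq_bigl => f; rewrite -/c -/(low f) -/(R f).
by have [-> | _] := eqVneq (low f) A; rewrite ?card_A ?eqxx ?andbT ?andbF.
Qed.
End Recurrence.
Arguments card_first_excess {F} HF F_empty {x z} z_sorted z_range {i}.

Theorem mainTheorem17 (F : fclass) (HF : binomial_class F)
  (Hempty : forall S X : finType, #|S| = 0 -> #|F S X| = 1)
  (x : nat) (hx : 0 < x) (n : nat) (z : seq nat)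
  (hsize : size z = n) (hsorted : sorted leq z)
  (hrange : all (fun t => (1 <= t) && (t <= x)) z) :
  pcount F n x =
    \sum_(i < n) 'C(n, i) * pcount F (n - i) (x - nth 0 z i) * ord F x (take i z)
    + ord F x z.
Proof.
rewrite -{}hsize /pcount (@ord_sort_final_vals _ _ _ (size z) erefl) -sum1_card.
under eq_bigr => f _ do rewrite -(dominated_or_first_excess z (sort leq (final_vals f))).
rewrite big_split /= sum_nat_of_bool_card addnC exchange_big /=; congr (_ + _).
apply: eq_bigr => i _.
by rewrite sum_nat_of_bool_card (card_first_excess HF Hempty hsorted hrange).
Qed.
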